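(* Let $K_1,K_{-1}\subseteq[N]$ be disjoint, $x_{\pm1}=\mathbb{1}_{K_1}-\mathbb{1}_{K_{-1}}$, and $A\in\mathbb{R}^{m\times N}$. The following are equivalent: (i) $x_{\pm1}$ is the unique solution of $\min\|x\|_1$ subject to $Ax=Ax_{\pm1}$ and $x\in[-1,1]^N$; (ii) $\ker(A)\cap N_K\cap H_{K_1,K_{-1}}=\{0\}$, where $K=K_1\cup K_{-1}$.
   Context: $\mathbb{1}_S$ has entries $1$ on $S$ and $0$ elsewhere; $K^C=[N]\setminus K$; $w_S$ agrees with $w$ on $S$ and is zero elsewhere. $N_K=\{w\in\mathbb{R}^N:\|w_K\|_1\ge\|w_{K^C}\|_1\}$ and $H_{K_1,K_{-1}}=\{w\in\mathbb{R}^N: w_i\le 0\text{ for } i\in K_1,\ w_i\ge0\text{ for } i\in K_{-1}\}$. ''Unique solution'' means unique minimizer. *)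

From mathcomp Require Import all_boot all_order all_algebra.
Set Implicit Arguments. Unset Strict Implicit. Unset Printing Implicit Defensive.
Import Order.TTheory GRing.Theory Num.Theory.
Local Open Scope ring_scope.

Definition l1_on (R : numDomainType) (N : nat) (S : {set 'I_N}) (w : 'cV[R]_N) : R :=
  \sum_(i in S) `|w i 0|.

Definition l1 (R : numDomainType) (N : nat) (w : 'cV[R]_N) : R :=
  \sum_i `|w i 0|.

Definition indic (R : numDomainType) (N : nat) (S : {set 'I_N}) : 'cV[R]_N :=
  \col_i (if i \in S then 1 else 0).

Definition xpm1 (R : numDomainType) (N : nat) (K1 Km1 : {set 'I_N}) : 'cV[R]_N :=
  indic R K1 - indic R Km1.

Definition in_ker (R : numDomainType) (m N : nat) (A : 'M[R]_(m, N)) (w : 'cV[R]_N) : Prop :=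
  A *m w = 0.

Definition in_NK (R : numDomainType) (N : nat) (K : {set 'I_N}) (w : 'cV[R]_N) : Prop :=
  l1_on (~: K) w <= l1_on K w.

Definition in_H (R : numDomainType) (N : nat) (K1 Km1 : {set 'I_N}) (w : 'cV[R]_N) : Prop :=
  (forall i, i \in K1 -> w i 0 <= 0) /\ (forall i, i \in Km1 -> 0 <= w i 0).

Definition feasible (R : numDomainType) (m N : nat) (A : 'M[R]_(m, N)) (b : 'cV[R]_m)
  (z : 'cV[R]_N) : Prop :=
  A *m z = b /\ (forall i, -1 <= z i 0 <= 1).

Definition unique_box_l1_min (R : numDomainType) (m N : nat) (A : 'M[R]_(m, N))
  (b : 'cV[R]_m) (x : 'cV[R]_N) : Prop :=
  feasible A b x /\
  (forall z, feasible A b z -> l1 x <= l1 z) /\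
  (forall z, feasible A b z -> (forall z', feasible A b z' -> l1 z <= l1 z') -> z = x).

From mathcomp Require Import all_boot all_order all_algebra.
From mathcomp Require Import lra.
Import Order.TTheory GRing.Theory Num.Theory.
Set Implicit Arguments. Unset Strict Implicit. Unset Printing Implicit Defensive.
Local Open Scope ring_scope.

(* Write feasible points as [x + w].  The box forces [w] into [ker A ∩ H], and
   conversely every [w] in [ker A ∩ H] with entries in [[-1, 1]] is feasible.
   Splitting the l1 norm along [K] gives
   [||x + w||_1 >= ||x||_1 - ||w_K||_1 + ||w_{K^C}||_1], with equality when [w]
   is in [H] and in the unit box.  Hence a nonzero feasible direction fails to
   increase the norm iff it lies in [N_K]; and since [ker A ∩ N_K ∩ H] is a
   cone, any nonzero element of it rescales to such a direction. *)

Lemma unique_box_l1_minP (R : realDomainType) (m N : nat) (A : 'M[R]_(m, N))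
    (b : 'cV[R]_m) (x : 'cV[R]_N) :
  feasible A b x ->
  unique_box_l1_min A b x <->
  (forall z, feasible A b z -> z != x -> l1 x < l1 z).
Proof.
move=> fx; split=> [[_ [x_min x_uniq]] z fz z_neq_x | x_strict].
  rewrite ltNge; apply: contra z_neq_x => le_z_x; apply/eqP.
  by apply: x_uniq => // z' fz'; apply: le_trans le_z_x (x_min z' fz').
split=> //; split=> [z fz | z fz z_min].
  by have [-> // | /(x_strict z fz)/ltW] := eqVneq z x.
have [// | /(x_strict z fz)] := eqVneq z x.
by rewrite ltNge z_min.
Qed.

Section L1Split.
Variables (R : numDomainType) (N : nat) (K : {set 'I_N}).

Lemma l1_split (w : 'cV[R]_N) : l1 w = l1_on K w + l1_on (~: K) w.
Proof.
rewrite /l1 /l1_on (bigID (mem K)) /=; congr (_ + _).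
by apply: eq_bigl => i; rewrite in_setC.
Qed.

Lemma l1_onZ (S : {set 'I_N}) (t : R) (w : 'cV[R]_N) : 0 <= t ->
  l1_on S (t *: w) = t * l1_on S w.
Proof.
move=> t_ge0; rewrite /l1_on mulr_sumr; apply: eq_bigr => i _.
by rewrite mxE normrM (ger0_norm t_ge0).
Qed.

Variable x : 'cV[R]_N.
Hypothesis x_supp : forall i, i \notin K -> x i 0 = 0.

Lemma l1_supp : l1 x = l1_on K x.
Proof.
rewrite (l1_split x) [l1_on (~: K) x]big1 ?addr0 // => i.
by rewrite in_setC => /x_supp ->; rewrite normr0.
Qed.

Lemma l1_on_compl_addl (w : 'cV[R]_N) : l1_on (~: K) (x + w) = l1_on (~: K) w.
Proof.
by apply: eq_bigr => i; rewrite in_setC mxE => /x_supp ->; rewrite add0r.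
Qed.

Lemma l1_addr_ge (w : 'cV[R]_N) :
  l1 x - l1_on K w + l1_on (~: K) w <= l1 (x + w).
Proof.
rewrite l1_supp (l1_split (x + w)) l1_on_compl_addl lerD2r /l1_on -sumrB.
by apply: ler_sum => i _; rewrite mxE lerB_normD.
Qed.

Lemma l1_addrE (w : 'cV[R]_N) :
  (forall i, i \in K -> `|(x + w) i 0| = `|x i 0| - `|w i 0|) ->
  l1 (x + w) = l1 x - l1_on K w + l1_on (~: K) w.
Proof.
move=> normK; rewrite l1_supp (l1_split (x + w)) l1_on_compl_addl.
by rewrite /l1_on (eq_bigr _ normK) sumrB.
Qed.

End L1Split.

Section Cone.
Variables (R : numDomainType) (N : nat) (t : R) (w : 'cV[R]_N).

Lemma in_kerZ (m : nat) (A : 'M[R]_(m, N)) : in_ker A w -> in_ker A (t *: w).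
Proof. by rewrite /in_ker -scalemxAr => ->; rewrite scaler0. Qed.

Hypothesis t_ge0 : 0 <= t.

Lemma in_NKZ (K : {set 'I_N}) : in_NK K w -> in_NK K (t *: w).
Proof. by rewrite /in_NK !l1_onZ // => /(ler_wpM2l t_ge0). Qed.

Lemma in_HZ (K1 Km1 : {set 'I_N}) : in_H K1 Km1 w -> in_H K1 Km1 (t *: w).
Proof.
case=> wK1 wKm1; split=> i iK; rewrite mxE.
  exact: mulr_ge0_le0 (wK1 i iK).
exact: mulr_ge0 (wKm1 i iK).
Qed.

End Cone.

Lemma scale_into_unit_box (R : realFieldType) (N : nat) (w : 'cV[R]_N) :
  exists2 t : R, 0 < t & forall i, `|(t *: w) i 0| <= 1.
Proof.
have l1_ge0 : 0 <= l1 w by apply: sumr_ge0 => i _.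
exists (1 + l1 w)^-1; first by rewrite invr_gt0; lra.
move=> i; rewrite mxE normrM ger0_norm ?invr_ge0 ?addr_ge0 //.
rewrite ler_pdivrMl ?mulr1; last lra.
have : `|w i 0| <= l1 w.
  by rewrite /l1 (bigD1 i) //= lerDl sumr_ge0.
lra.
Qed.

Section SignVector.
Variables (R : realDomainType) (m N : nat) (K1 Km1 : {set 'I_N}).
Variable A : 'M[R]_(m, N).
Hypothesis K1_Km1_disj : [disjoint K1 & Km1].

Local Notation x := (xpm1 R K1 Km1).
Local Notation K := (K1 :|: Km1).

Lemma xpm1E i : x i 0 = if i \in K1 then 1 else if i \in Km1 then -1 else 0.
Proof.
rewrite /xpm1 /indic !mxE.
have [iK1 | _] := boolP (i \in K1); first by rewrite (disjointFr K1_Km1_disj iK1) subr0.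
by case: (i \in Km1); rewrite ?sub0r ?oppr0.
Qed.

Lemma xpm1_supp i : i \notin K -> x i 0 = 0.
Proof. by rewrite xpm1E !inE negb_or => /andP[/negbTE -> /negbTE ->]. Qed.

Lemma norm_xpm1 i : `|x i 0| = (i \in K)%:R.
Proof.
rewrite xpm1E !inE.
by case: (i \in K1); case: (i \in Km1); rewrite ?normrN ?normr1 ?normr0.
Qed.

Lemma norm_xpm1_addr (w : 'cV[R]_N) i : in_H K1 Km1 w -> `|w i 0| <= 1 ->
  i \in K -> `|(x + w) i 0| = `|x i 0| - `|w i 0|.
Proof.
case=> wK1 wKm1; rewrite ler_norml => /andP[w_ge w_le].
rewrite norm_xpm1 mxE xpm1E !inE => /orP[iK1 | iKm1].
  have := wK1 i iK1; rewrite iK1 /= => w_le0.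
  by rewrite (ler0_norm w_le0) ger0_norm; lra.
have := wKm1 i iKm1; rewrite iKm1 (disjointFl K1_Km1_disj iKm1) orbT /= => w_ge0.
by rewrite (ger0_norm w_ge0) ler0_norm; lra.
Qed.

Lemma feasible_xpm1 : feasible A (A *m x) x.
Proof. by split=> // i; rewrite -ler_norml norm_xpm1; case: (i \in K). Qed.

Lemma feasible_xpm1_addr (w : 'cV[R]_N) :
  in_ker A w -> in_H K1 Km1 w -> (forall i, `|w i 0| <= 1) ->
  feasible A (A *m x) (x + w).
Proof.
move=> Aw0 wH w_box; split; first by rewrite mulmxDr Aw0 addr0.
move=> i; rewrite -ler_norml.
have [iK | iNK] := boolP (i \in K).
  by rewrite norm_xpm1_addr // norm_xpm1 iK lerBlDr lerDl.
by rewrite mxE xpm1_supp // add0r.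
Qed.

Lemma feasible_xpm1_subr (z : 'cV[R]_N) : feasible A (A *m x) z ->
  in_ker A (z - x) /\ in_H K1 Km1 (z - x).
Proof.
case=> Az z_box; split; first by rewrite /in_ker mulmxBr Az subrr.
split=> i iK; have /andP[z_ge z_le] := z_box i; rewrite 2!mxE xpm1E iK.
  by rewrite subr_le0.
by rewrite (disjointFl K1_Km1_disj iK) opprK; lra.
Qed.

End SignVector.

Theorem theorem3p2 (R : realFieldType) (m N : nat) (K1 Km1 : {set 'I_N})
  (A : 'M[R]_(m, N)) :
  [disjoint K1 & Km1] ->
  (unique_box_l1_min A (A *m xpm1 R K1 Km1) (xpm1 R K1 Km1) <->
   (forall w : 'cV[R]_N,
      in_ker A w -> in_NK (K1 :|: Km1) w -> in_H K1 Km1 w -> w = 0)).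
Proof.
move=> disj; set x := xpm1 R K1 Km1; set K := K1 :|: Km1.
have x_supp : forall i, i \notin K -> x i 0 = 0 := xpm1_supp R disj.
rewrite unique_box_l1_minP; last exact: feasible_xpm1.
split=> [x_strict w Aw0 wNK wH | cone0 z fz z_neq_x].
  have [// | w_neq0] := eqVneq w 0; exfalso.
  have [t t_gt0 v_box] := scale_into_unit_box w; set v := t *: w in v_box.
  have t_ge0 := ltW t_gt0.
  have vH : in_H K1 Km1 v := in_HZ t_ge0 wH.
  have vNK : in_NK K v := in_NKZ t_ge0 wNK.
  have fxv := feasible_xpm1_addr disj (in_kerZ t Aw0) vH v_box.
  have xv_neq_x : x + v != x by rewrite -subr_eq0 addrC addKr scaler_eq0 gt_eqF.
  have l1_xv : l1 (x + v) = l1 x - l1_on K v + l1_on (~: K) v.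
    by apply: l1_addrE => // i; apply: norm_xpm1_addr.
  have := x_strict _ fxv xv_neq_x; rewrite l1_xv.
  by move: vNK; rewrite /in_NK; lra.
have [Aw0 wH] := feasible_xpm1_subr disj fz.
have K_lt_KC : l1_on K (z - x) < l1_on (~: K) (z - x).
  rewrite ltNge; apply/negP => /(cone0 _ Aw0)/(_ wH)/eqP.
  by rewrite subr_eq0 (negbTE z_neq_x).
have := l1_addr_ge x_supp (z - x); rewrite [x + _]addrC subrK.
lra.
Qed.
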